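(* Let $G$ be a finite solvable group and $M$ a maximal subgroup of $G$. If $M$ is exponential in $G$, then $M \lhd G$.
   Context: A subgroup $H$ of finite index in a group $G$ is called exponential in $G$ if $x^{|G:H|} \in H$ for every $x \in G$. *)

From mathcomp Require Import all_boot all_fingroup all_solvable.
Set Implicit Arguments. Unset Strict Implicit. Unset Printing Implicit Defensive.
Local Open Scope group_scope.

Definition exponential (gT : finGroupType) (H G : {set gT}) : Prop :=
  forall x, x \in G -> x ^+ #|G : H| \in H.

From mathcomp Require Import all_boot all_fingroup all_solvable.
Set Implicit Arguments. Unset Strict Implicit. Unset Printing Implicit Defensive.
Local Open Scope group_scope.

(* The index of a maximal subgroup M of a solvable group G is a power of a
   prime p: modulo the core of M, some nontrivial normal elementary abelian
   p-subgroup L is not contained in M, so G = M L and |G : M| divides |L|.  If M is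
   exponential, every p'-element x of G lies in M, because x^|G:M| generates
   <[x]>.  Hence M contains the subgroup K generated by the p'-elements of G;
   G/K is a p-group, in which the maximal subgroup M/K is normal. *)

Lemma maximal_index_pnat (gT : finGroupType) (pi : nat_pred) (G M L : {group gT}) :
  maximal M G -> L <| G -> pi.-group L -> ~~ (L \subset M) -> pi.-nat #|G : M|.
Proof.
move=> maxM /andP[sLG nLG] piL notsLM.
have [/andP[sMG _] maxMG] := maxgroupP maxM.
have defG : M * L = G.
  apply/eqP; rewrite eqEproper mul_subG //= -norm_joinEl ?(subset_trans sMG nLG) //.
  by apply: contra notsLM => /maxMG <-; rewrite ?joing_subl ?joing_subr.
by rewrite -defG indexMg (pnat_dvd (dvdn_indexg _ _) piL).
Qed.

Lemma gcore_quotient_gcore (gT : finGroupType) (G M : {group gT}) :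
  M \subset G -> gcore (M / gcore M G) (G / gcore M G) = 1.
Proof.
move=> sMG; set N := gcore M G; set C := gcore _ _.
have nNG : N <| G := gcore_normal sMG.
have nNM : N <| M := normalS (gcore_sub _ _) sMG nNG.
suff sCN : coset N @*^-1 C \subset N by rewrite -(cosetpreK C) quotientS1.
apply: gcore_max.
  by rewrite -(quotientGK nNM) morphpreS ?gcore_sub.
by rewrite -(quotientGK nNG) morphpre_norms ?gcore_norm.
Qed.

Lemma solvable_maximal_index_pnat (gT : finGroupType) (G M : {group gT}) :
  solvable G -> maximal M G -> exists2 p, prime p & p.-nat #|G : M|.
Proof.
move=> solG maxM; have sMG := proper_sub (maxgroupp maxM).
pose N := [group of gcore M G].
have nNG : N <| G := gcore_normal sMG.
have nNM : N <| M := normalS (gcore_sub _ _) sMG nNG.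
have maxMN : maximal (M / N) (G / N) by rewrite quotient_maximal.
have ntGN : G / N :!=: 1.
  by apply: contraTneq (maxgroupp maxMN) => ->; rewrite properE sub1G andbF.
have [L [_ nLG ntL abelL]] :=
  solvable_norm_abelem (quotient_sol N solG) (normal_refl _) ntGN.
have [p pr_p /abelem_pgroup pL] := is_abelemP abelL.
exists p => //.
rewrite -(index_quotient_eq (H := N)) ?normal_norm //; last first.
  exact: subset_trans (subsetIr _ _) (normal_sub nNM).
apply: (maximal_index_pnat maxMN nLG pL).
apply: contra ntL => sLM; rewrite -subG1 -(gcore_quotient_gcore sMG).
exact: gcore_max sLM (normal_norm nLG).
Qed.

Lemma exponential_coprime_mem (gT : finGroupType) (G H : {group gT}) x :
  exponential H G -> x \in G -> coprime #[x] #|G : H| -> x \in H.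
Proof.
move=> expH Gx; rewrite -generator_coprime => /eqP defx.
by rewrite -cycle_subG defx cycle_subG expH.
Qed.

Lemma p_elts_pgroup (gT : finGroupType) (pi : nat_pred) (G : {group gT}) :
  {in G, forall x, pi.-elt x} -> pi.-group G.
Proof.
move=> piG; apply/pgroupP => q pr_q /(Cauchy pr_q)[x Gx oxq].
by have := piG x Gx; rewrite /p_elt oxq pnatE.
Qed.

Definition pi_residual (gT : finGroupType) (pi : nat_pred) (G : {set gT}) :=
  <<[set x in G | pi^'.-elt x]>>.

Section PiResidual.

Variables (gT : finGroupType) (pi : nat_pred) (G : {group gT}).

Lemma pi_residual_normal : pi_residual pi G <| G.
Proof.
rewrite /normal gen_subG setIdE subsetIl /=.
apply: norms_gen; apply/normsP => g Gg; apply/setP => y.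
by rewrite mem_conjg !inE p_eltJ groupJr ?groupV.
Qed.

Lemma quotient_pi_residual_pgroup : pi.-group (G / pi_residual pi G).
Proof.
set K := pi_residual pi G.
apply: p_elts_pgroup => _ /morphimP[x Nx Gx ->].
have Kx' : x.`_pi^' \in K by rewrite mem_gen // inE groupX ?p_elt_constt.
rewrite -(consttC pi x) morphM ?groupX //= (coset_id Kx') mulg1.
exact: morph_p_elt (groupX _ _) (p_elt_constt _ _).
Qed.

End PiResidual.

Theorem corollary4p5 (gT : finGroupType) (G M : {group gT}) :
  solvable G -> maximal M G -> exponential M G -> M <| G.
Proof.
move=> solG maxM expM; have sMG := proper_sub (maxgroupp maxM).
have [p _ pGM] := solvable_maximal_index_pnat solG maxM.
have pGK := quotient_pi_residual_pgroup p G.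
set K := pi_residual p G in pGK *.
have nKG : K <| G := pi_residual_normal p G.
have sKM : K \subset M.
  rewrite gen_subG; apply/subsetP => x /setIdP[Gx p'x].
  by apply: exponential_coprime_mem expM Gx _; rewrite coprime_sym (pnat_coprime pGM).
have nKM := normalS sKM sMG nKG.
have maxMK : maximal (M / K) (G / K) by rewrite quotient_maximal.
have := p_maximal_normal pGK maxMK.
by rewrite -cosetpre_normal !quotientGK.
Qed.
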